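(* On $\mathcal{P}(\mathbb{R}^{2m},\mathbb{C})\cap\ker(\Delta_x,\Delta_u)$, $$[S_x,S_u]=\frac{H_x-H_u}{(1+H_x)(1+H_u)}\,CA-(H_x-H_u).$$
   Context: Fix an integer $m>4$. For $x,u\in\mathbb{R}^m$ let $\mathcal{P}(\mathbb{R}^{2m},\mathbb{C})$ be complex polynomials in $(x,u)$, $\mathcal{P}_{p,q}$ those of bidegree $(p,q)$. Write $|x|^2=\sum x_j^2$, $\langle u,x\rangle=\sum u_jx_j$, $\Delta_x=\sum\partial_{x_j}^2$, $\Delta_u=\sum\partial_{u_j}^2$, $\langle\partial_u,\partial_x\rangle=\sum\partial_{u_j}\partial_{x_j}$, $\langle x,\partial_u\rangle=\sum x_j\partial_{u_j}$, $\langle u,\partial_x\rangle=\sum u_j\partial_{x_j}$, $\mathbb{E}_x=\sum x_j\partial_{x_j}$, $\mathbb{E}_u=\sum u_j\partial_{u_j}$, $H_x=-(\mathbb{E}_x+\frac m2)$, $H_u=-(\mathbb{E}_u+\frac m2)$, $\ker(D_1,\dots,D_r)=\bigcap\ker D_i$. Every $P\in\mathcal{P}_{p,q}$ is uniquely $\sum_{a,b\ge0}|x|^{2a}|u|^{2b}H'_{p-2a,q-2b}$ with $H'_{p-2a,q-2b}\in\mathcal{P}_{p-2a,q-2b}\cap\ker(\Delta_x,\Delta_u)$; $\pi_{\mathfrak{s}}P:=H'_{p,q}$. On $\ker(\Delta_x,\Delta_u)$: $S_x=\pi_{\mathfrak{s}}\langle x,\partial_u\rangle$, $S_u=\pi_{\mathfrak{s}}\langle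 u,\partial_x\rangle$, $A=\pi_{\mathfrak{s}}\langle\partial_u,\partial_x\rangle$, $C=\pi_{\mathfrak{s}}\langle u,x\rangle$. Convention: a rational function of $H_x,H_u$ written to the left of an operator product is evaluated at the eigenvalues of $H_x,H_u$ on the bihomogeneous output of that product; the term $-(H_x-H_u)$ acts as multiplication by the corresponding eigenvalue. *)

From HB Require Import structures.
From mathcomp Require Import all_boot all_order all_algebra.
From mathcomp Require Import complex.
From mathcomp Require Import mpoly.
From Stdlib Require Import ClassicalEpsilon.

Set Implicit Arguments. Unset Strict Implicit. Unset Printing Implicit Defensive.
Import Order.TTheory GRing.Theory Num.Theory.
Local Open Scope ring_scope.

Section Defs.
Variables (R : rcfType) (m : nat).
Local Notation P := {mpoly R[i][m + m]}.

Definition xv (j : 'I_m) : P := 'X_(lshift m j).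
Definition uv (j : 'I_m) : P := 'X_(rshift m j).
Definition dx (j : 'I_m) (f : P) : P := mderiv (lshift m j) f.
Definition du (j : 'I_m) (f : P) : P := mderiv (rshift m j) f.

Definition normx2 : P := \sum_(j < m) xv j ^+ 2.
Definition normu2 : P := \sum_(j < m) uv j ^+ 2.
Definition ux : P := \sum_(j < m) uv j * xv j.

Definition lapx (f : P) : P := \sum_(j < m) dx j (dx j f).
Definition lapu (f : P) : P := \sum_(j < m) du j (du j f).
Definition dudx (f : P) : P := \sum_(j < m) du j (dx j f).
Definition xdu (f : P) : P := \sum_(j < m) xv j * du j f.
Definition udx (f : P) : P := \sum_(j < m) uv j * dx j f.

Definition xdeg (mo : 'X_{1..(m + m)}) : nat := \sum_(j < m) mo (lshift m j).
Definition udeg (mo : 'X_{1..(m + m)}) : nat := \sum_(j < m) mo (rshift m j).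

Definition bihomog (p q : nat) (f : P) : Prop :=
  forall mo : 'X_{1..(m + m)}, f@_mo != 0 -> xdeg mo = p /\ udeg mo = q.

Definition harmonic (f : P) : Prop := lapx f = 0 /\ lapu f = 0.

Definition sdecomp (p q : nat) (f : P) (Hf : nat -> nat -> P) : Prop :=
  bihomog p q f /\
  (forall a b, (2 * a <= p)%N -> (2 * b <= q)%N ->
     bihomog (p - 2 * a) (q - 2 * b) (Hf a b) /\ harmonic (Hf a b)) /\
  f = \sum_(a < (p./2).+1) \sum_(b < (q./2).+1)
        normx2 ^+ a * normu2 ^+ b * Hf a b.

(* pi_s f := H'_{p,q}, the (unique) harmonic component of degree (p,q)
   in the decomposition of a bihomogeneous f *)
Definition pis (f : P) : P :=
  epsilon (inhabits 0)
    (fun H => exists p q Hf, sdecomp p q f Hf /\ H = Hf 0%N 0%N).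

Definition Sx (f : P) : P := pis (xdu f).
Definition Su (f : P) : P := pis (udx f).
Definition Aop (f : P) : P := pis (dudx f).
Definition Cop (f : P) : P := pis (ux * f).

(* eigenvalue of H_x (resp. H_u) on P_{p,.} (resp. P_{.,q}) : -(p + m/2) *)
Definition Hval (p : nat) : R[i] := - (p%:R + m%:R / 2).

End Defs.

(* For the Fischer inner product <p, q> = sum_mo p_mo conj(q_mo) mo!,
   multiplication by x_i is adjoint to d/dx_i, so |x|^2 is adjoint to Delta_x.
   A harmonic polynomial is therefore orthogonal to the ideal (|x|^2, |u|^2),
   hence lies in it only if it is 0: pi_s f is the unique harmonic h with
   f - h in the ideal, and exhibiting any such h computes it.  Existence is
   the Fischer decomposition, built one block of variables at a time by
   solving Delta (|x|^2 G) = Delta r.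

   For H harmonic of bidegree (p, q) put D = <d_u, d_x> H.  Then A H = D and
   S_x H = <x, d_u> H + |x|^2 D / (2 (1 + Hval p)), symmetrically for S_u.
   Modulo the ideal, [<x, d_u>, <u, d_x>] = E_x - E_u and
   <x, d_u> (|u|^2 D) = 2 <u, x> D, so S_x S_u H - S_u S_x H is congruent to
   (p - q) H + (1 / (1 + Hval q) - 1 / (1 + Hval p)) <u, x> D, that is, to
   the right-hand side.  Both sides are harmonic, so they are equal. *)

From HB Require Import structures.
From mathcomp Require Import all_boot all_order all_algebra.
From mathcomp Require Import complex.
From mathcomp Require Import mpoly.
From Stdlib Require Import ClassicalEpsilon.
From mathcomp Require Import ring zify.
Set Implicit Arguments. Unset Strict Implicit. Unset Printing Implicit Defensive.
Import Order.TTheory GRing.Theory Num.Theory.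
Local Open Scope ring_scope.

Section PartialDegree.
Variables (F : nzRingType) (n m : nat) (f : 'I_m -> 'I_n).
Implicit Types (p q : {mpoly F[n]}) (mo : 'X_{1..n}).

Definition pdeg mo : nat := (\sum_(j < m) mo (f j))%N.

Definition phomog (k : nat) p : bool := all (fun mo => pdeg mo == k) (msupp p).

Lemma phomogP k p : reflect (forall mo, p@_mo != 0 -> pdeg mo = k) (phomog k p).
Proof.
apply: (iffP allP) => hp mo; first by rewrite -mcoeff_msupp => /hp /eqP.
by rewrite mcoeff_msupp => /hp ->.
Qed.

Lemma pdegD mo mo' : pdeg (mo + mo')%MM = (pdeg mo + pdeg mo')%N.
Proof. by rewrite /pdeg -big_split; apply: eq_bigr => j _; rewrite mnmDE. Qed.

Lemma pdegU_fam (f_inj : injective f) j : pdeg U_(f j) = 1%N.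
Proof.
rewrite /pdeg (bigD1 j) //= mnm1E eqxx big1 // => l hl.
by rewrite mnm1E (inj_eq f_inj) eq_sym (negbTE hl).
Qed.

Lemma pdegU_notin i : (forall j, f j != i) -> pdeg U_(i) = 0%N.
Proof. by move=> hi; rewrite /pdeg big1 // => j _; rewrite mnm1E eq_sym (negbTE (hi j)). Qed.

Lemma phomog0 k : phomog k 0.
Proof. by apply/phomogP => mo; rewrite mcoeff0 eqxx. Qed.

Lemma phomogD k p q : phomog k p -> phomog k q -> phomog k (p + q).
Proof.
move=> /phomogP hp /phomogP hq; apply/phomogP => mo; rewrite mcoeffD.
by have [->|/hp //] := eqVneq p@_mo 0; rewrite add0r => /hq.
Qed.

Lemma phomogZ k c p : phomog k p -> phomog k (c *: p).
Proof.
move=> /phomogP hp; apply/phomogP => mo; rewrite mcoeffZ.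
by have [->|/hp //] := eqVneq p@_mo 0; rewrite mulr0 eqxx.
Qed.

Lemma phomogB k p q : phomog k p -> phomog k q -> phomog k (p - q).
Proof. by move=> hp hq; rewrite -scaleN1r; apply/phomogD/phomogZ. Qed.

Lemma phomog_sum k (I : Type) (r : seq I) (P : pred I) (G : I -> {mpoly F[n]}) :
  (forall i, P i -> phomog k (G i)) -> phomog k (\sum_(i <- r | P i) G i).
Proof. by move=> hG; elim/big_ind: _ => //; [apply: phomog0 | apply: phomogD]. Qed.

Lemma phomogM k l p q : phomog k p -> phomog l q -> phomog (k + l) (p * q).
Proof.
move=> /phomogP hp /phomogP hq; apply/phomogP => mo; rewrite mcoeffM.
apply: contraNeq => neq.
rewrite big1 // => -[mo1 mo2] /= /eqP def_mo.
have [->|/hp deg1] := eqVneq p@_mo1 0; first by rewrite mul0r.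
have [->|/hq deg2] := eqVneq q@_mo2 0; first by rewrite mulr0.
have : pdeg mo = (k + l)%N by rewrite def_mo pdegD deg1 deg2.
by move/eqP; rewrite (negbTE neq).
Qed.

Lemma phomogX i : phomog (pdeg U_(i)) 'X_i.
Proof.
by apply/phomogP => mo; rewrite mcoeffX; have [<-|] := eqVneq U_(i)%MM mo; rewrite ?eqxx.
Qed.

Lemma phomog_mderiv k i p : phomog k p -> phomog (k - pdeg U_(i)) (mderiv i p).
Proof.
move=> /phomogP hp; apply/phomogP => mo; rewrite mcoeff_mderiv.
have [->|/hp <-] := eqVneq p@_(mo + U_(i))%MM 0; first by rewrite mul0rn eqxx.
by rewrite pdegD addnK.
Qed.

Lemma phomog0_mderiv i p : phomog 0 p -> (0 < pdeg U_(i))%N -> mderiv i p = 0.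
Proof.
move=> /phomogP hp hi; apply/mpolyP => mo; rewrite mcoeff_mderiv mcoeff0.
have [->|/hp] := eqVneq p@_(mo + U_(i))%MM 0; first by rewrite mul0rn.
by rewrite pdegD => /eqP; rewrite addn_eq0 [pdeg U_(i) == 0%N]eqn0Ngt hi andbF.
Qed.

Lemma phomogX_fam (f_inj : injective f) j : phomog 1 'X_(f j).
Proof. by have := phomogX (f j); rewrite pdegU_fam. Qed.

Lemma phomogX_notin i : (forall j, f j != i) -> phomog 0 'X_i.
Proof. by move=> hi; have := phomogX i; rewrite pdegU_notin. Qed.

Lemma phomog_mderiv_fam (f_inj : injective f) k j p :
  phomog k p -> phomog k.-1 (mderiv (f j) p).
Proof. by move/(phomog_mderiv (f j)); rewrite pdegU_fam // subn1. Qed.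

Lemma phomog_mderiv_notin k i p :
  (forall j, f j != i) -> phomog k p -> phomog k (mderiv i p).
Proof. by move=> hi /(phomog_mderiv i); rewrite pdegU_notin // subn0. Qed.

Lemma mcoeffXM i p mo : ('X_i * p)@_mo = p@_(mo - U_(i))%MM *+ (0 < mo i)%N.
Proof.
rewrite -commr_mpolyX; have [mo_i0|mo_i_gt0] := posnP (mo i).
  rewrite mulr0n; apply/eqP; rewrite mcoeff_eq0 (perm_mem (msuppMX p U_(i))).
  by apply/mapP => -[mo' _ def_mo]; move: mo_i0; rewrite def_mo mnmDE mnm1E eqxx.
have {1}-> : mo = (U_(i) + (mo - U_(i)))%MM.
  rewrite addmC submK //; apply/mnm_lepP => j; rewrite mnm1E.
  by case: eqP => [<-|]; rewrite ?mo_i_gt0.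
by rewrite mcoeffMX mulr1n.
Qed.

Lemma mcoeffX_mderiv i p mo : ('X_i * mderiv i p)@_mo = p@_mo *+ mo i.
Proof.
rewrite mcoeffXM mcoeff_mderiv; have [->|mo_i_gt0] := posnP (mo i); first by rewrite !mulr0n.
have le_U_mo : (U_(i) <= mo)%MM.
  by apply/mnm_lepP => j; rewrite mnm1E; case: eqP => [<-|]; rewrite ?mo_i_gt0.
by rewrite submK // mnmBE mnm1E eqxx subn1 prednK // mulr1n.
Qed.

End PartialDegree.

Section Operators.
Variables (F : comNzRingType) (n m : nat).
Implicit Types (f g : 'I_m -> 'I_n) (p : {mpoly F[n]}).

Definition nrm2 f : {mpoly F[n]} := \sum_(j < m) 'X_(f j) ^+ 2.
Definition dotX f g : {mpoly F[n]} := \sum_(j < m) 'X_(f j) * 'X_(g j).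
Definition mlap f g p : {mpoly F[n]} := \sum_(j < m) mderiv (f j) (mderiv (g j) p).
Definition polar f g p : {mpoly F[n]} := \sum_(j < m) 'X_(f j) * mderiv (g j) p.

Fact mlap_is_linear f g : linear (mlap f g).
Proof.
move=> c p q; rewrite /mlap scaler_sumr -big_split; apply: eq_bigr => j _.
by rewrite !linearP.
Qed.

HB.instance Definition _ f g := GRing.isLinear.Build F {mpoly F[n]} {mpoly F[n]}
  _ (mlap f g) (mlap_is_linear f g).

Fact polar_is_linear f g : linear (polar f g).
Proof.
move=> c p q; rewrite /polar scaler_sumr -big_split; apply: eq_bigr => j _.
by rewrite linearP mulrDr scalerAr.
Qed.

HB.instance Definition _ f g := GRing.isLinear.Build F {mpoly F[n]} {mpoly F[n]}
  _ (polar f g) (polar_is_linear f g).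

Lemma polar_phomog f k p : phomog f k p -> polar f f p = p *+ k.
Proof.
move=> /phomogP hp; apply/mpolyP => mo; rewrite (raddf_sum (mcoeff mo)) mcoeffMn.
rewrite (eq_bigr (fun j => p@_mo *+ mo (f j))) => [|j _]; last exact: mcoeffX_mderiv.
by rewrite sumrMnr; have [->|/hp <-] := eqVneq p@_mo 0; rewrite ?mul0rn.
Qed.

Lemma dotXC f g : dotX f g = dotX g f.
Proof. by apply: eq_bigr => j _; rewrite mulrC. Qed.

Lemma mlapC f g p : mlap f g p = mlap g f p.
Proof. by apply: eq_bigr => j _; rewrite mderiv_comm. Qed.

Lemma mderiv_mlap i f g p : mderiv i (mlap f g p) = mlap f g (mderiv i p).
Proof.
rewrite /mlap raddf_sum; apply: eq_bigr => j _ /=.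
by rewrite (mderiv_comm (f j) i) (mderiv_comm (g j) i).
Qed.

Lemma mlap_comm f g f' g' p : mlap f g (mlap f' g' p) = mlap f' g' (mlap f g p).
Proof.
rewrite {2}/mlap raddf_sum; apply: eq_bigr => j _.
by rewrite !mderiv_mlap.
Qed.

End Operators.

Notation lap f := (mlap f f).

Section TwoFamilies.
Variables (F : comNzRingType) (n m : nat) (f g : 'I_m -> 'I_n).
Hypotheses (f_inj : injective f) (g_inj : injective g) (fg_disj : forall j l, f j != g l).
Implicit Types (p : {mpoly F[n]}).

Let gf_disj j l : g j != f l. Proof. by rewrite eq_sym. Qed.

Lemma mderivX_fam j l : mderiv (f l) ('X_(f j) : {mpoly F[n]}) = (j == l)%:R.
Proof.
rewrite mderivX mnm1E (inj_eq f_inj); case: eqP => [->|_]; last by rewrite scale0r.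
by rewrite -[X in (X - _)%MM]add0m addmK mpolyX0 scale1r.
Qed.

Lemma mderivX_other j l : mderiv (g l) ('X_(f j) : {mpoly F[n]}) = 0.
Proof. by rewrite mderivX mnm1E (negbTE (fg_disj j l)) scale0r. Qed.

Lemma mderiv_nrm2 j : mderiv (f j) (nrm2 F f) = 'X_(f j) *+ 2.
Proof.
rewrite raddf_sum (bigD1 j) //= big1 => [|l ne_lj]; last first.
  by rewrite expr2 mderivM mderivX_fam (negbTE ne_lj) mul0r mulr0 addr0.
by rewrite expr2 mderivM mderivX_fam eqxx mulr1 mul1r addr0 mulr2n.
Qed.

Lemma mderiv_nrm2_other j : mderiv (g j) (nrm2 F f) = 0.
Proof.
by rewrite raddf_sum big1 // => l _ /=; rewrite expr2 mderivM mderivX_other mulr0 mul0r addr0.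
Qed.

Lemma lap_nrm2M k p : phomog f k p ->
  lap f (nrm2 F f * p) = p *+ (2 * m + 4 * k) + nrm2 F f * lap f p.
Proof.
move=> hp; have step j : mderiv (f j) (mderiv (f j) (nrm2 F f * p)) =
    p *+ 2 + ('X_(f j) * mderiv (f j) p) *+ 4 + nrm2 F f * mderiv (f j) (mderiv (f j) p).
  rewrite !(mderivM, mderivD) mderiv_nrm2 mderivMn mderivX_fam eqxx /=; ring.
rewrite /mlap (eq_bigr _ (fun j _ => step j)) !big_split /= -mulr_sumr.
by rewrite -/(polar f f p) (polar_phomog hp) sumr_const card_ord -!mulrnDr; congr (_ *+ _ + _); lia.
Qed.

Lemma lap_nrm2M_other p : lap g (nrm2 F f * p) = nrm2 F f * lap g p.
Proof.
rewrite /mlap mulr_sumr; apply: eq_bigr => j _.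
by rewrite !(mderivM, mderiv_nrm2_other, mul0r, add0r).
Qed.

Lemma mderivXM j l p :
  mderiv (f l) ('X_(f j) * p) = (j == l)%:R * p + 'X_(f j) * mderiv (f l) p.
Proof. by rewrite mderivM mderivX_fam. Qed.

Lemma mderivXM_other j l p : mderiv (g l) ('X_(f j) * p) = 'X_(f j) * mderiv (g l) p.
Proof. by rewrite mderivM mderivX_other mul0r add0r. Qed.

Lemma sum_delta j (G : 'I_m -> {mpoly F[n]}) : \sum_(l < m) (j == l)%:R * G l = G j.
Proof.
rewrite (bigD1 j) //= eqxx mul1r big1 ?addr0 // => l ne_lj.
by rewrite eq_sym (negbTE ne_lj) mul0r.
Qed.

Lemma lapXM j p : lap f ('X_(f j) * p) = mderiv (f j) p *+ 2 + 'X_(f j) * lap f p.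
Proof.
have step l : mderiv (f l) (mderiv (f l) ('X_(f j) * p)) =
    ((j == l)%:R * mderiv (f l) p) *+ 2 + 'X_(f j) * mderiv (f l) (mderiv (f l) p).
  rewrite mderivXM mderivD mderivXM; case: (j == l) => /=.
    by rewrite !mul1r mulr2n addrA.
  by rewrite !mul0r mderiv0 !add0r mul0rn add0r.
by rewrite /mlap (eq_bigr _ (fun l _ => step l)) big_split sumrMnl sum_delta mulr_sumr.
Qed.

Lemma lapXM_other j p : lap g ('X_(f j) * p) = 'X_(f j) * lap g p.
Proof. by rewrite /mlap mulr_sumr; apply: eq_bigr => l _; rewrite !mderivXM_other. Qed.

Lemma lap_polar p : lap f (polar f g p) = mlap f g p *+ 2 + polar f g (lap f p).
Proof.
rewrite /polar raddf_sum; under eq_bigr do rewrite /= lapXM -mderiv_mlap.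
by rewrite big_split /= sumrMnl.
Qed.

Lemma lap_polar_other p : lap g (polar f g p) = polar f g (lap g p).
Proof.
rewrite /polar raddf_sum; apply: eq_bigr => j _ /=.
by rewrite lapXM_other -mderiv_mlap.
Qed.

Lemma polar_nrm2M p :
  polar g f (nrm2 F f * p) = nrm2 F f * polar g f p + (dotX F g f * p) *+ 2.
Proof.
rewrite /polar mulr_sumr [dotX F g f * p]mulr_suml -sumrMnl -big_split; apply: eq_bigr => j _ /=.
by rewrite mderivM mderiv_nrm2; ring.
Qed.

Lemma polar_polar (h : 'I_m -> 'I_n) p : polar h f (polar f g p) =
  polar h g p + \sum_(i < m) \sum_(j < m) 'X_(h i) * 'X_(f j) * mderiv (f i) (mderiv (g j) p).
Proof.
rewrite /polar -big_split; apply: eq_bigr => i _ /=.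
rewrite raddf_sum mulr_sumr /=; under eq_bigr do rewrite mderivXM eq_sym mulrDr [X in _ + X]mulrA.
by rewrite big_split /= -mulr_sumr (sum_delta i (fun j => mderiv (g j) p)).
Qed.

Lemma phomog0_mlap (h : 'I_m -> 'I_n) p : phomog f 0 p -> mlap h f p = 0.
Proof.
by move=> hp; apply: big1 => j _; rewrite (phomog0_mderiv hp) ?pdegU_fam ?mderiv0.
Qed.

Lemma phomog_lap0 k p : (k < 2)%N -> phomog f k p -> lap f p = 0.
Proof.
case: k => [_|[_|//]] hp; first exact: phomog0_mlap.
by apply: big1 => j _; rewrite (phomog0_mderiv (phomog_mderiv_fam f_inj j hp)) ?pdegU_fam.
Qed.

Lemma phomog_lap k p : phomog f k p -> phomog f (k - 2) (lap f p).
Proof.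
move=> hp; apply: phomog_sum => j _.
have -> : (k - 2 = k.-1.-1)%N by rewrite -!subn1 -subnDA.
exact: (phomog_mderiv_fam f_inj j (phomog_mderiv_fam f_inj j hp)).
Qed.

Lemma phomog_lap_other k p : phomog g k p -> phomog g k (lap f p).
Proof.
move=> hp; apply: phomog_sum => j _.
exact: (phomog_mderiv_notin (gf_disj^~ j) (phomog_mderiv_notin (gf_disj^~ j) hp)).
Qed.

Lemma phomog_mlap k p : phomog f k p -> phomog f k.-1 (mlap f g p).
Proof.
move=> hp; apply: phomog_sum => j _.
exact: (phomog_mderiv_fam f_inj j (phomog_mderiv_notin (fg_disj^~ j) hp)).
Qed.

Lemma phomog_nrm2 : phomog f 2 (nrm2 F f).
Proof.
apply: phomog_sum => j _; rewrite expr2.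
by have := phomogM (phomogX_fam F f_inj j) (phomogX_fam F f_inj j); rewrite addn1.
Qed.

Lemma phomog_nrm2_other : phomog g 0 (nrm2 F f).
Proof.
apply: phomog_sum => j _; rewrite expr2.
exact: (phomogM (phomogX_notin F (gf_disj^~ j)) (phomogX_notin F (gf_disj^~ j))).
Qed.

Lemma phomog_nrm2M_other k p : phomog g k p -> phomog g k (nrm2 F f * p).
Proof. by move=> hp; rewrite -[k]add0n; apply: phomogM phomog_nrm2_other hp. Qed.

Lemma phomog_polar k p : phomog f k p -> phomog f k.+1 (polar f g p).
Proof.
move=> hp; apply: phomog_sum => j _; rewrite -add1n; apply: phomogM.
  exact: phomogX_fam.
exact: (phomog_mderiv_notin (fg_disj^~ j) hp).
Qed.

Lemma phomog_polar_other k p : phomog g k p -> phomog g k.-1 (polar f g p).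
Proof.
move=> hp; apply: phomog_sum => j _; rewrite -[k.-1]add0n; apply: phomogM.
  exact: (phomogX_notin F (gf_disj^~ j)).
exact: (phomog_mderiv_fam g_inj j hp).
Qed.

Lemma phomog_dotXM k p : phomog f k p -> phomog f k.+1 (dotX F f g * p).
Proof.
move=> hp; rewrite -add1n; apply: phomogM => //; apply: phomog_sum => j _.
exact: (phomogM (phomogX_fam F f_inj j) (phomogX_notin F (fg_disj^~ j))).
Qed.

Lemma lap_polar_correct k c p : phomog f k p -> lap f p = 0 ->
  lap f (polar f g p + c *: (nrm2 F f * mlap f g p)) =
  (2 + c * (2 * m + 4 * k.-1)%:R) *: mlap f g p.
Proof.
move=> hp lap_p; have lap_D : lap f (mlap f g p) = 0 by rewrite mlap_comm lap_p linear0.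
rewrite linearD linearZ /= lap_polar (lap_nrm2M (phomog_mlap hp)) lap_D lap_p !linear0.
by rewrite mulr0 !addr0 scalerDl -scalerA !scaler_nat.
Qed.

Lemma lap_polar_correct_other c p : lap g p = 0 ->
  lap g (polar f g p + c *: (nrm2 F f * mlap f g p)) = 0.
Proof.
move=> lap_p; rewrite linearD linearZ /= lap_polar_other lap_nrm2M_other.
by rewrite mlap_comm lap_p !linear0 mulr0 scaler0 addr0.
Qed.

End TwoFamilies.

Lemma polar_comm (F : comNzRingType) (n m : nat) (f g : 'I_m -> 'I_n) (p : {mpoly F[n]}) :
  injective f -> injective g ->
  polar f g (polar g f p) - polar g f (polar f g p) = polar f f p - polar g g p.
Proof.
move=> f_inj g_inj; rewrite (polar_polar f g_inj) (polar_polar g f_inj).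
suff -> : \sum_(i < m) \sum_(j < m) 'X_(g i) * 'X_(f j) * mderiv (f i) (mderiv (g j) p) =
          \sum_(i < m) \sum_(j < m) 'X_(f i) * 'X_(g j) * mderiv (g i) (mderiv (f j) p).
  by rewrite opprD addrACA subrr addr0.
rewrite exchange_big; apply: eq_bigr => j _; apply: eq_bigr => i _.
by rewrite mderiv_comm [_ * 'X_(f j)]mulrC.
Qed.

Section FischerDecomposition.
Variables (F : numFieldType) (n m : nat) (f : 'I_m -> 'I_n).
Hypotheses (f_inj : injective f) (m_gt0 : (0 < m)%N).
Variable Q : {mpoly F[n]} -> Prop.
Hypotheses (Q_scale : forall c p, Q p -> Q (c *: p)) (Q_sub : forall p q, Q p -> Q q -> Q (p - q))
  (Q_nrm2M : forall p, Q p -> Q (nrm2 F f * p)) (Q_lap : forall p, Q p -> Q (lap f p)).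
Local Notation N := (nrm2 F f).

Lemma solve_shifted_lap k a r : (0 < a)%N -> phomog f k r -> Q r ->
  exists X, [/\ a%:R *: X + N * lap f X = r, phomog f k X & Q X].
Proof.
elim/ltn_ind: k a r => k IH a r a_gt0 hr Qr.
have a_neq0 : a%:R != 0 :> F by rewrite pnatr_eq0 -lt0n.
have [k_lt2|k_ge2] := ltnP k 2.
  exists (a%:R^-1 *: r); split; [|exact: phomogZ|exact: Q_scale].
  rewrite [lap f _]linearZ /= (phomog_lap0 f_inj k_lt2 hr) scaler0 mulr0 addr0.
  by rewrite scalerA divff ?scale1r.
set c := (2 * m + 4 * (k - 2))%N.
have [Y [eqY hY QY]] : exists Y, [/\ (a + c)%:R *: Y + N * lap f Y = lap f r,
    phomog f (k - 2) Y & Q Y].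
  apply: IH; [lia | by rewrite addn_gt0 a_gt0 | exact: phomog_lap | exact: Q_lap].
(* With this Y, X := (r - N Y) / a satisfies Delta X = Y. *)
exists (a%:R^-1 *: (r - N * Y)).
have lapX : lap f (a%:R^-1 *: (r - N * Y)) = Y.
  rewrite linearZ linearB /= (lap_nrm2M f_inj hY) -/c -eqY natrD scalerDl !scaler_nat.
  by rewrite -[Y *+ a + _ + _]addrA addrK -scaler_nat scalerA mulVf ?scale1r.
split.
- by rewrite lapX scalerA divff // scale1r subrK.
- apply/phomogZ/phomogB => //; rewrite -(subnKC k_ge2).
  exact: phomogM (phomog_nrm2 _ f_inj) hY.
- by apply/Q_scale/Q_sub => //; apply: Q_nrm2M.
Qed.


Lemma harmonic_split k r : phomog f k r -> Q r -> exists h G,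
  r = h + N * G /\ [/\ lap f h = 0, phomog f k h, phomog f (k - 2) G, Q h & Q G].
Proof.
move=> hr Qr; have Q0 : Q 0 by rewrite -(scale0r r); apply: Q_scale.
have [k_lt2|k_ge2] := ltnP k 2.
  exists r, 0; split; first by rewrite mulr0 addr0.
  by split=> //; [exact: (phomog_lap0 f_inj k_lt2 hr) | exact: phomog0].
set c := (2 * m + 4 * (k - 2))%N.
have [|G [eqG hG QG]] := solve_shifted_lap (a := c) _ (phomog_lap f_inj hr) (Q_lap Qr).
  by rewrite addn_gt0 muln_gt0 m_gt0.
exists (r - N * G), G; split; first by rewrite subrK.
split=> //.
- by rewrite linearB /= (lap_nrm2M f_inj hG) -/c -scaler_nat eqG subrr.
- by apply: phomogB => //; rewrite -(subnKC k_ge2); exact: phomogM (phomog_nrm2 _ f_inj) hG.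
- exact/Q_sub/Q_nrm2M.
Qed.

Lemma fischer_decomposition k r : phomog f k r -> Q r ->
  exists hs : nat -> {mpoly F[n]}, r = \sum_(a < k./2.+1) N ^+ a * hs a /\
    forall a, (2 * a <= k)%N -> [/\ lap f (hs a) = 0, phomog f (k - 2 * a) (hs a) & Q (hs a)].
Proof.
elim/ltn_ind: k r => k IH r hr Qr.
have [k_lt2|k_ge2] := ltnP k 2.
  exists (fun=> r); split.
    by case: k {IH} k_lt2 hr => [|[]] //= _ _; rewrite big_ord1 expr0 mul1r.
  move=> a le_2a_k; have -> : a = 0%N by lia.
  by rewrite muln0 subn0; split=> //; exact: (phomog_lap0 f_inj k_lt2 hr).
have [h [G [-> [lap_h hh hG Qh QG]]]] := harmonic_split hr Qr.
have [|hs [-> hs_spec]] := IH (k - 2)%N _ G hG QG; first lia.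
exists (fun a => if a is a'.+1 then hs a' else h); split.
  rewrite -[in k./2](subnKC k_ge2) [RHS]big_ord_recl expr0 mul1r mulr_sumr /=.
  by congr (_ + _); apply: eq_bigr => a _; rewrite exprS mulrA.
case=> [_|a le_2a_k]; first by rewrite muln0 subn0.
have [|lap_a h_a Q_a] := hs_spec a; first lia.
by split=> //; rewrite (_ : k - 2 * a.+1 = k - 2 - 2 * a)%N //; lia.
Qed.

End FischerDecomposition.

Section FischerProduct.
Variables (F : numClosedFieldType) (n : nat).
Implicit Types (p q h : {mpoly F[n]}) (mo : 'X_{1..n}).

Definition mfact mo : nat := (\prod_(i < n) (mo i)`!)%N.

Definition fprod p q : F := \sum_(mo <- msupp p) p@_mo * (q@_mo)^* * (mfact mo)%:R.

Lemma fprodE s p q : uniq s -> {subset msupp p <= s} ->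
  fprod p q = \sum_(mo <- s) p@_mo * (q@_mo)^* * (mfact mo)%:R.
Proof.
move=> s_uniq supp_s; rewrite /fprod [RHS](bigID (mem (msupp p))) /=.
rewrite [X in _ = _ + X]big1 => [|mo]; last first.
  by rewrite mcoeff_msupp negbK => /eqP ->; rewrite !mul0r.
rewrite addr0 -[in RHS]big_filter; apply: perm_big.
apply: uniq_perm; rewrite ?filter_uniq ?msupp_uniq //.
by move=> mo; rewrite mem_filter andb_idr // => /supp_s.
Qed.

Lemma fprodDl p1 p2 q : fprod (p1 + p2) q = fprod p1 q + fprod p2 q.
Proof.
pose s := undup (msupp p1 ++ msupp p2).
have s_uniq : uniq s := undup_uniq _.
have sub1 : {subset msupp p1 <= s} by move=> mo; rewrite mem_undup mem_cat => ->.
have sub2 : {subset msupp p2 <= s} by move=> mo; rewrite mem_undup mem_cat orbC => ->.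
have sub12 : {subset msupp (p1 + p2) <= s} by move=> mo /msuppD_le; rewrite mem_undup.
rewrite !(fprodE _ s_uniq) // -big_split; apply: eq_bigr => mo _.
by rewrite mcoeffD !mulrDl.
Qed.

Lemma fprod_suml (I : Type) (r : seq I) (G : I -> {mpoly F[n]}) q :
  fprod (\sum_(i <- r) G i) q = \sum_(i <- r) fprod (G i) q.
Proof. by elim/big_rec2: _ => [|i x y _ <-]; rewrite ?fprodDl // /fprod msupp0 big_nil. Qed.

Lemma fprod0r p : fprod p 0 = 0.
Proof. by rewrite /fprod big1 // => mo _; rewrite mcoeff0 rmorph0 mulr0 mul0r. Qed.

Lemma fprod_sumr (I : Type) (r : seq I) p (G : I -> {mpoly F[n]}) :
  fprod p (\sum_(i <- r) G i) = \sum_(i <- r) fprod p (G i).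
Proof.
rewrite /fprod exchange_big; apply: eq_bigr => mo _.
by rewrite (raddf_sum (mcoeff mo)) rmorph_sum mulr_sumr mulr_suml.
Qed.

Lemma mfact_gt0 mo : (0 < mfact mo)%N.
Proof. by apply: prodn_gt0 => i; apply: fact_gt0. Qed.

Lemma mfactDU mo i : mfact (mo + U_(i))%MM = ((mo i).+1 * mfact mo)%N.
Proof.
rewrite /mfact (bigD1 i) //= [in RHS](bigD1 i) //= mnmDE mnm1E eqxx addn1 factS mulnA.
congr (_ * _)%N; apply: eq_bigr => j ne_ji.
by rewrite mnmDE mnm1E eq_sym (negbTE ne_ji) addn0.
Qed.

Lemma fprodXM i p h : fprod ('X_i * p) h = fprod p (mderiv i h).
Proof.
rewrite /fprod mulrC (perm_big _ (msuppMX p U_(i))) big_map; apply: eq_bigr => mo _.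
rewrite mcoeffMX mcoeff_mderiv addmC mfactDU rmorphMn natrM.
by rewrite -mulr_natr; ring.
Qed.

Lemma fprod_nrm2M m (f : 'I_m -> 'I_n) p h : fprod (nrm2 F f * p) h = fprod p (lap f h).
Proof.
rewrite mulr_suml fprod_suml /mlap fprod_sumr; apply: eq_bigr => j _.
by rewrite expr2 -mulrA !fprodXM.
Qed.

Lemma fprod_eq0 h : fprod h h = 0 -> h = 0.
Proof.
move=> /eqP; rewrite psumr_eq0 => [/allP h0|mo _]; last first.
  by rewrite mulr_ge0 ?mul_conjC_ge0 ?ler0n.
apply/eqP; rewrite -msupp_eq0; case def_s: (msupp h) => [//|mo s].
have mo_in : mo \in msupp h by rewrite def_s mem_head.
have /implyP/(_ isT) := h0 mo mo_in; rewrite mulf_eq0 mul_conjC_eq0 pnatr_eq0.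
rewrite mcoeff_eq0 mo_in /= => /eqP mfact0.
by have := mfact_gt0 mo; rewrite mfact0.
Qed.

End FischerProduct.

Lemma x_inj {m} : injective (@lshift m m). Proof. exact: lshift_inj. Qed.
Lemma u_inj {m} : injective (@rshift m m). Proof. exact: rshift_inj. Qed.
Lemma xu_disj {m} (j l : 'I_m) : lshift m j != rshift m l. Proof. by rewrite eq_lrshift. Qed.
Lemma ux_disj {m} (j l : 'I_m) : rshift m j != lshift m l. Proof. by rewrite eq_rlshift. Qed.

Section Bidegree.
Variables (R : rcfType) (m : nat).
Local Notation C := R[i].
Local Notation P := {mpoly C[m + m]}.
Local Notation x := (@lshift m m).
Local Notation u := (@rshift m m).
Implicit Types (f h H : P).

Lemma normx2E : normx2 R m = nrm2 C x. Proof. by []. Qed.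
Lemma normu2E : normu2 R m = nrm2 C u. Proof. by []. Qed.
Lemma uxE : ux R m = dotX C u x. Proof. by []. Qed.
Lemma xduE f : xdu f = polar x u f. Proof. by []. Qed.
Lemma udxE f : udx f = polar u x f. Proof. by []. Qed.
Lemma dudxE f : dudx f = mlap u x f. Proof. by []. Qed.

Lemma bihomogE p q f : bihomog p q f <-> phomog x p f /\ phomog u q f.
Proof.
split=> [hf|[/phomogP hx /phomogP hu] mo nz]; last by split; [exact: hx | exact: hu].
by split; apply/phomogP => mo /hf [].
Qed.

Lemma harmonicE f : harmonic f <-> lap x f = 0 /\ lap u f = 0.
Proof. by []. Qed.

Lemma harmonicB f h : harmonic f -> harmonic h -> harmonic (f - h).
Proof.
move=> /harmonicE[fx fu] /harmonicE[hx hu]; apply/harmonicE.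
by rewrite !linearB /= fx fu hx hu subr0.
Qed.

Lemma harmonicZ c f : harmonic f -> harmonic (c *: f).
Proof.
by move=> /harmonicE[fx fu]; apply/harmonicE; rewrite !linearZ /= fx fu scaler0.
Qed.

Definition xu_ideal f : Prop := exists g1 g2, f = normx2 R m * g1 + normu2 R m * g2.

Lemma xu_idealB f h : xu_ideal f -> xu_ideal h -> xu_ideal (f - h).
Proof. by move=> [g1 [g2 ->]] [g1' [g2' ->]]; exists (g1 - g1'), (g2 - g2'); ring. Qed.

Lemma xu_idealD f h : xu_ideal f -> xu_ideal h -> xu_ideal (f + h).
Proof. by move=> [g1 [g2 ->]] [g1' [g2' ->]]; exists (g1 + g1'), (g2 + g2'); ring. Qed.

Lemma xu_idealZ c f : xu_ideal f -> xu_ideal (c *: f).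
Proof.
by move=> [g1 [g2 ->]]; exists (c *: g1), (c *: g2); rewrite scalerDr !scalerAr.
Qed.

Lemma xu_ideal_normx2M g : xu_ideal (normx2 R m * g).
Proof. by exists g, 0; rewrite mulr0 addr0. Qed.

Lemma xu_ideal_normu2M g : xu_ideal (normu2 R m * g).
Proof. by exists 0, g; rewrite mulr0 add0r. Qed.

Lemma harmonic_ideal_eq0 h : harmonic h -> xu_ideal h -> h = 0.
Proof.
move=> /harmonicE[hx hu] [g1 [g2 def_h]]; apply: fprod_eq0.
by rewrite {1}def_h fprodDl normx2E normu2E !fprod_nrm2M hx hu !fprod0r addr0.
Qed.

Lemma harmonic_ideal_uniq f h1 h2 : harmonic h1 -> harmonic h2 ->
  xu_ideal (f - h1) -> xu_ideal (f - h2) -> h1 = h2.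
Proof.
move=> harm1 harm2 i1 i2; apply/eqP; rewrite -subr_eq0; apply/eqP.
apply: harmonic_ideal_eq0; first exact: harmonicB.
have -> : h1 - h2 = (f - h2) - (f - h1) by ring.
exact: xu_idealB.
Qed.

Hypothesis m_gt0 : (0 < m)%N.

Lemma fischer_decomposition_x p q f : phomog x p f -> phomog u q f ->
  exists hs : nat -> P, f = \sum_(a < p./2.+1) normx2 R m ^+ a * hs a /\
    forall a, (2 * a <= p)%N ->
      [/\ lap x (hs a) = 0, phomog x (p - 2 * a) (hs a) & phomog u q (hs a)].
Proof.
apply: (fischer_decomposition x_inj m_gt0 (Q := phomog u q)) => [c h|h1 h2|h|h].
- exact: phomogZ.
- exact: phomogB.
- exact: (phomog_nrm2M_other xu_disj).
- exact: (phomog_lap_other xu_disj).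
Qed.

Lemma fischer_decomposition_u p q h : phomog u q h -> phomog x p h /\ lap x h = 0 ->
  exists hs : nat -> P, h = \sum_(b < q./2.+1) normu2 R m ^+ b * hs b /\
    forall b, (2 * b <= q)%N ->
      [/\ lap u (hs b) = 0, phomog u (q - 2 * b) (hs b) & phomog x p (hs b) /\ lap x (hs b) = 0].
Proof.
apply: (fischer_decomposition u_inj m_gt0 (Q := fun g => phomog x p g /\ lap x g = 0))
  => [c g|g1 g2|g|g] [gx lx].
- by split; [exact: phomogZ | rewrite linearZ /= lx scaler0].
- by move=> [g2x l2x]; split; [exact: phomogB | rewrite linearB /= lx l2x subr0].
- by split; [exact: (phomog_nrm2M_other ux_disj) | rewrite (lap_nrm2M_other ux_disj) lx mulr0].
- by split; [exact: (phomog_lap_other ux_disj) | rewrite mlap_comm lx linear0].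
Qed.

Lemma sdecomp_exists p q f : bihomog p q f -> exists Hf, sdecomp p q f Hf.
Proof.
move=> bf; have [fx fu] := (bihomogE p q f).1 bf.
have [hs [def_f hs_spec]] := fischer_decomposition_x fx fu.
have split_u a : exists hsa : nat -> P, (2 * a <= p)%N ->
    hs a = \sum_(b < q./2.+1) normu2 R m ^+ b * hsa b /\ forall b, (2 * b <= q)%N ->
      [/\ lap u (hsa b) = 0, phomog u (q - 2 * b) (hsa b) &
           phomog x (p - 2 * a) (hsa b) /\ lap x (hsa b) = 0].
  have [le_2a_p|_] := boolP (2 * a <= p)%N; last by exists (fun=> 0).
  have [lap_a hx_a hu_a] := hs_spec a le_2a_p.
  by have [hsa spec_a] := fischer_decomposition_u hu_a (conj hx_a lap_a); exists hsa.
have [Hf Hf_spec] := ClassicalEpsilon.choice _ split_u.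
exists Hf; split=> //; split.
  move=> a b le_2a_p le_2b_q; have [_ /(_ b le_2b_q) [lu hu [hx lx]]] := Hf_spec a le_2a_p.
  by split; [apply/bihomogE | apply/harmonicE].
rewrite {1}def_f; apply: eq_bigr => a _.
have le_2a_p : (2 * a <= p)%N by rewrite mul2n -geq_half_double -ltnS.
have [-> _] := Hf_spec a le_2a_p.
by rewrite mulr_sumr; apply: eq_bigr => b _; rewrite mulrA.
Qed.

Lemma xu_ideal_sum_sub N M (G : nat -> nat -> P) : xu_ideal
  (\sum_(a < N.+1) \sum_(b < M.+1) normx2 R m ^+ a * normu2 R m ^+ b * G a b - G 0%N 0%N).
Proof.
exists (\sum_(a < N) \sum_(b < M.+1) normx2 R m ^+ a * normu2 R m ^+ b * G a.+1 b).
exists (\sum_(b < M) normu2 R m ^+ b * G 0%N b.+1).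
rewrite big_ord_recl big_ord_recl !expr0 !mul1r addrAC [G _ _ + _]addrC addrK addrC.
rewrite !mulr_sumr; congr (_ + _); apply: eq_bigr => a _.
  by rewrite mulr_sumr; apply: eq_bigr => b _; rewrite lift0 exprS !mulrA.
by rewrite lift0 exprS mul1r mulrA.
Qed.

Lemma sdecomp_head p q f Hf : sdecomp p q f Hf ->
  [/\ bihomog p q (Hf 0%N 0%N), harmonic (Hf 0%N 0%N) & xu_ideal (f - Hf 0%N 0%N)].
Proof.
move=> [_ [Hf_spec ->]]; have [b00 h00] := Hf_spec 0%N 0%N (leq0n _) (leq0n _).
by rewrite !muln0 !subn0 in b00; split=> //; apply: xu_ideal_sum_sub.
Qed.

Lemma pis_spec p q f : bihomog p q f ->
  [/\ bihomog p q (pis f), harmonic (pis f) & xu_ideal (f - pis f)].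
Proof.
move=> bf; have [Hf dec] := sdecomp_exists bf.
have [b00 h00 i00] := sdecomp_head dec.
suff -> : pis f = Hf 0%N 0%N by [].
have : exists H, exists p q Hf, sdecomp p q f Hf /\ H = Hf 0%N 0%N by exists (Hf 0%N 0%N), p, q, Hf.
move/(epsilon_spec (inhabits 0)); rewrite -/(pis f) => -[p' [q' [Hf' [dec' ->]]]].
have [_ h00' i00'] := sdecomp_head dec'.
exact: harmonic_ideal_uniq h00' h00 i00' i00.
Qed.

Lemma pis_unique p q f h : bihomog p q f -> harmonic h -> xu_ideal (f - h) -> pis f = h.
Proof.
move=> /pis_spec[_ harm_pis i_pis] harm_h i_h.
exact: (harmonic_ideal_uniq harm_pis harm_h i_pis i_h).
Qed.

End Bidegree.

Section Commutator.
Variables (R : rcfType) (m : nat).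
(* 1 + Hval p never vanishes once 2 < m; the theorem's 4 < m is only used
   through this. *)
Hypothesis m_gt2 : (2 < m)%N.
Local Notation C := R[i].
Local Notation P := {mpoly C[m + m]}.
Local Notation x := (@lshift m m).
Local Notation u := (@rshift m m).
Local Notation Hv := (@Hval R m).
Implicit Types (H : P).

Let m_gt0 : (0 < m)%N := ltnW (ltnW m_gt2).

Lemma Hval_add1_neq0 p : 1 + Hv p != 0.
Proof.
have -> : 1 + Hv p = - ((2 * p + m - 2)%N%:R / 2).
  by rewrite /Hval natrB ?natrD ?natrM; [field | lia].
by rewrite oppr_eq0 mulf_eq0 invr_eq0 !pnatr_eq0 negb_or; apply/andP; split; lia.
Qed.

Lemma correction_coef_eq0 k : 2 + ((1 + Hv k.+1)^-1 / 2) * (2 * m + 4 * k)%:R = 0.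
Proof.
have -> : ((2 * m + 4 * k)%N%:R : C) = - (4 * (1 + Hv k.+1)).
  by rewrite /Hval natrD !natrM -addn1 natrD; field.
by move: (1 + Hv k.+1) (Hval_add1_neq0 k.+1) => y y_neq0; field.
Qed.

Lemma bihomog_xdu p q H : bihomog p q H -> bihomog p.+1 q.-1 (xdu H).
Proof.
move=> /bihomogE[hx hu]; apply/bihomogE; rewrite xduE.
by split; [exact: (phomog_polar x_inj xu_disj hx) | exact: (phomog_polar_other u_inj xu_disj hu)].
Qed.

Lemma bihomog_udx p q H : bihomog p q H -> bihomog p.-1 q.+1 (udx H).
Proof.
move=> /bihomogE[hx hu]; apply/bihomogE; rewrite udxE.
by split; [exact: (phomog_polar_other x_inj ux_disj hx) | exact: (phomog_polar u_inj ux_disj hu)].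
Qed.

Lemma bihomog_dudx p q H : bihomog p q H -> bihomog p.-1 q.-1 (dudx H).
Proof.
move=> /bihomogE[hx hu]; apply/bihomogE; rewrite dudxE.
split; last exact: (phomog_mlap u_inj ux_disj hu).
by rewrite mlapC; exact: (phomog_mlap x_inj xu_disj hx).
Qed.

Lemma bihomog_uxM p q H : bihomog p q H -> bihomog p.+1 q.+1 (ux R m * H).
Proof.
move=> /bihomogE[hx hu]; apply/bihomogE; rewrite uxE.
split; last exact: (phomog_dotXM u_inj ux_disj hu).
by rewrite dotXC; exact: (phomog_dotXM x_inj xu_disj hx).
Qed.

Lemma harmonic_dudx H : harmonic H -> harmonic (dudx H).
Proof.
move=> /harmonicE[hx hu]; apply/harmonicE.
by rewrite dudxE !(mlap_comm _ _ u x) hx hu !linear0.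
Qed.

Lemma AopE p q H : bihomog p q H -> harmonic H -> Aop H = dudx H.
Proof.
move=> bH hH; apply: (pis_unique m_gt0 (bihomog_dudx bH) (harmonic_dudx hH)).
by rewrite subrr -(mulr0 (normx2 R m)); apply: xu_ideal_normx2M.
Qed.

Lemma lap_polar_correct_Hval (f g : 'I_m -> 'I_(m + m)) k H :
  injective f -> (forall j l, f j != g l) -> phomog f k H -> lap f H = 0 ->
  lap f (polar f g H + ((1 + Hv k)^-1 / 2) *: (nrm2 C f * mlap f g H)) = 0.
Proof.
move=> f_inj fg_disj hH lH; rewrite (lap_polar_correct f_inj fg_disj _ hH lH).
case: k hH => [hH|k _]; last by rewrite correction_coef_eq0 scale0r.
by rewrite mlapC (phomog0_mlap f_inj g hH) scaler0.
Qed.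

Lemma SxE p q H : bihomog p q H -> harmonic H ->
  Sx H = xdu H + ((1 + Hv p)^-1 / 2) *: (normx2 R m * dudx H).
Proof.
move=> bH /harmonicE[lx lu]; have [hx _] := (bihomogE p q H).1 bH.
apply: (pis_unique m_gt0 (bihomog_xdu bH)).
  apply/harmonicE; rewrite xduE normx2E dudxE mlapC; split.
    exact: (lap_polar_correct_Hval x_inj xu_disj hx lx).
  exact: (lap_polar_correct_other xu_disj _ lu).
by rewrite opprD addrA subrr add0r -scaleNr; apply/xu_idealZ/xu_ideal_normx2M.
Qed.

Lemma SuE p q H : bihomog p q H -> harmonic H ->
  Su H = udx H + ((1 + Hv q)^-1 / 2) *: (normu2 R m * dudx H).
Proof.
move=> bH /harmonicE[lx lu]; have [_ hu] := (bihomogE p q H).1 bH.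
apply: (pis_unique m_gt0 (bihomog_udx bH)).
  apply/harmonicE; rewrite udxE normu2E dudxE; split.
    exact: (lap_polar_correct_other ux_disj _ lx).
  exact: (lap_polar_correct_Hval u_inj ux_disj hu lu).
by rewrite opprD addrA subrr add0r -scaleNr; apply/xu_idealZ/xu_ideal_normu2M.
Qed.

Lemma polar_S_commutator_mod_ideal p q H : bihomog p q H -> harmonic H ->
  xu_ideal (xdu (Su H) - udx (Sx H) -
    ((Hv p - Hv q) / ((1 + Hv p) * (1 + Hv q)) *: (ux R m * dudx H) - (Hv p - Hv q) *: H)).
Proof.
move=> bH hH; have [hx hu] := (bihomogE p q H).1 bH.
rewrite (SuE bH hH) (SxE bH hH) !(xduE, udxE) !linearD !linearZ /=.
rewrite normx2E normu2E (polar_nrm2M x u_inj) (polar_nrm2M u x_inj) [dotX C x u]dotXC -uxE.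
have -> : polar x u (polar u x H) = polar u x (polar x u H) + (H *+ p - H *+ q).
  have := polar_comm H x_inj u_inj; rewrite (polar_phomog hx) (polar_phomog hu) => <-.
  by rewrite addrC subrK.
set cp := (1 + Hv p)^-1 / 2; set cq := (1 + Hv q)^-1 / 2.
have e_eq : Hv p - Hv q = q%:R - p%:R by rewrite /Hval; ring.
have k_eq : (Hv p - Hv q) / ((1 + Hv p) * (1 + Hv q)) = cq *+ 2 - cp *+ 2.
  have half2 (y : C) : (y / 2) *+ 2 = y by rewrite -mulr_natr divfK // pnatr_eq0.
  have -> : Hv p - Hv q = (1 + Hv p) - (1 + Hv q) by rewrite opprD addrACA subrr add0r.
  rewrite !half2; move: (1 + Hv p) (1 + Hv q) (Hval_add1_neq0 p) (Hval_add1_neq0 q).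
  by move=> a b a0 b0; field; rewrite a0 b0.
rewrite k_eq e_eq !scalerBl -(scalerMnl cq) -(scalerMnl cp) !scaler_nat.
rewrite !(scalerN, scalerDr, scalerMnr, scalerAr).
exists (- (cp *: polar u x (dudx H))), (cq *: polar x u (dudx H)).
rewrite -normx2E -normu2E.
move: (polar u x _) (cp *: polar u x _) (cq *: polar x u _).
by move: (ux R m * (cp *: _)) (ux R m * (cq *: _)) => Zp Zq A Xp Xq; ring.
Qed.

Lemma bihomog_Sx p q H : bihomog p q H -> bihomog p.+1 q.-1 (Sx H).
Proof. by move/bihomog_xdu/(pis_spec m_gt0) => []. Qed.

Lemma bihomog_Su p q H : bihomog p q H -> bihomog p.-1 q.+1 (Su H).
Proof. by move/bihomog_udx/(pis_spec m_gt0) => []. Qed.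

Lemma commutator_S_harmonic p q H c e : bihomog p q H -> harmonic H ->
  harmonic (Sx (Su H) - Su (Sx H) - (c *: Cop (dudx H) - e *: H)).
Proof.
move=> bH hH.
have [_ hA _] := pis_spec m_gt0 (bihomog_xdu (bihomog_Su bH)).
have [_ hB _] := pis_spec m_gt0 (bihomog_udx (bihomog_Sx bH)).
have [_ hC _] := pis_spec m_gt0 (bihomog_uxM (bihomog_dudx bH)).
exact: (harmonicB (harmonicB hA hB) (harmonicB (harmonicZ c hC) (harmonicZ e hH))).
Qed.

Lemma commutator_S_mod_ideal p q H : bihomog p q H -> harmonic H ->
  xu_ideal (Sx (Su H) - Su (Sx H) -
    ((Hv p - Hv q) / ((1 + Hv p) * (1 + Hv q)) *: Cop (dudx H) - (Hv p - Hv q) *: H)).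
Proof.
move=> bH hH; set e := Hv p - Hv q; set k := e / _.
have [_ _ iA] : [/\ _, _ & xu_ideal (xdu (Su H) - Sx (Su H))] :=
  pis_spec m_gt0 (bihomog_xdu (bihomog_Su bH)).
have [_ _ iB] : [/\ _, _ & xu_ideal (udx (Sx H) - Su (Sx H))] :=
  pis_spec m_gt0 (bihomog_udx (bihomog_Sx bH)).
have [_ _ iC] : [/\ _, _ & xu_ideal (ux R m * dudx H - Cop (dudx H))] :=
  pis_spec m_gt0 (bihomog_uxM (bihomog_dudx bH)).
have comm := polar_S_commutator_mod_ideal bH hH; rewrite -/e -/k in comm.
rewrite (_ : _ - _ - _ = xdu (Su H) - udx (Sx H) - (k *: (ux R m * dudx H) - e *: H)
    - (xdu (Su H) - Sx (Su H)) + (udx (Sx H) - Su (Sx H))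
    + k *: (ux R m * dudx H - Cop (dudx H))); last by rewrite scalerBr; ring.
exact: xu_idealD (xu_idealD (xu_idealB comm iA) iB) (xu_idealZ k iC).
Qed.

End Commutator.

Theorem lemma3p4 (R : rcfType) (m : nat) (hm : (4 < m)%N)
  (p q : nat) (H : {mpoly R[i][m + m]}) :
  bihomog p q H -> harmonic H ->
  Sx (Su H) - Su (Sx H) =
    ((@Hval R m p - @Hval R m q) / ((1 + @Hval R m p) * (1 + @Hval R m q)))
      *: Cop (Aop H)
    - (@Hval R m p - @Hval R m q) *: H.
Proof.
move=> bH hH; have m_gt2 : (2 < m)%N by lia.
rewrite (AopE m_gt2 bH hH); apply/eqP; rewrite -subr_eq0; apply/eqP.
apply: harmonic_ideal_eq0; first exact: (commutator_S_harmonic m_gt2 _ _ bH hH).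
exact: (commutator_S_mod_ideal m_gt2 bH hH).
Qed.
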